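(* Every WM set $S\subset\mathbb{N}$ contains an IP-set, i.e. there is a sequence $p_1,p_2,\dots$ of natural numbers such that $\{p_{i_1}+\dots+p_{i_k}: k\in\mathbb{N},\ i_1<\dots<i_k\}\subset S$.
   Context: $\mathbb{N}=\{1,2,\dots\}$. An IP-set is a set of the form $\{p_{i_1}+\dots+p_{i_k}: k\in\mathbb{N},\ i_1<\dots<i_k\}$ for an infinite sequence $(p_i)$ of natural numbers (not necessarily distinct). $\Omega=\{0,1\}^{\mathbb{N}}$ with product topology and left shift $T$; $X_{1_S}$ is the closure of $\{T^n1_S:n\ge0\}$. A point $\xi$ is generic for $(X,\mu,T)$ if $\frac1N\sum_{n=0}^{N-1}f(T^n\xi)\to\int f\,d\mu$ for all continuous $f$. $d(S)=\lim_N\frac1N|S\cap\{1,\dots,N\}|$. $S$ is a WM set if for some $T$-invariant Borel probability $\mu$ on $X_{1_S}$, $1_S$ is generic for $(X_{1_S},\mu,T)$, this system is weakly mixing, and $d(S)>0$. *)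

From HB Require Import structures.
From mathcomp Require Import all_boot all_order all_algebra.
From mathcomp Require Import all_classical all_reals all_analysis.
Set Implicit Arguments. Unset Strict Implicit. Unset Printing Implicit Defensive.
Import Order.TTheory GRing.Theory Num.Theory numFieldNormedType.Exports.
Local Open Scope classical_set_scope.
Local Open Scope ring_scope.

(* Omega = {0,1}^N with the product topology: MathComp-Analysis' cantor_space
   (prod_topology of discrete bool over nat).  Coordinate k (0-based) of a
   point corresponds to the natural number k+1 of the paper. *)
Definition Omega : Type := cantor_space.

Definition OmegaB : Type := g_sigma_algebraType (@open cantor_space).

Definition shift (w : cantor_space) : cantor_space := fun k => w k.+1.

Definition indic (S : set nat) : cantor_space := fun k => `[< S k.+1 >].

Definition orbit_closure (xi : cantor_space) : set cantor_space :=
  closure [set iter n shift xi | n in [set: nat]].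

(* mu is a T-invariant Borel probability measure on X (represented as a Borel
   probability on Omega giving full measure to the closed set X). *)
Definition invariant_prob_on (R : realType) (X : set OmegaB)
    (mu : probability OmegaB R) : Prop :=
  mu X = 1%E /\
  forall A : set OmegaB, measurable A -> A `<=` X ->
    mu (X `&` (shift : OmegaB -> OmegaB) @^-1` A) = mu A.

Definition generic (R : realType) (X : set OmegaB) (mu : probability OmegaB R)
    (xi : cantor_space) : Prop :=
  forall f : cantor_space -> R, {within X, continuous f} ->
    (fun N : nat => ((\sum_(n < N) f (iter n shift xi)) / N%:R)%:E) @ \oo
      --> (\int[mu]_(x in X) (f x)%:E)%E.

Definition weakly_mixing (R : realType) (X : set OmegaB)
    (mu : probability OmegaB R) : Prop :=
  forall A B : set OmegaB, measurable A -> measurable B -> A `<=` X -> B `<=` X ->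
    (fun N : nat =>
       (\sum_(n < N)
          `| fine (mu (A `&` (X `&` (iter n shift : OmegaB -> OmegaB) @^-1` B)))
             - fine (mu A) * fine (mu B) |) / N%:R) @ \oo --> (0 : R).

Definition has_density (R : realType) (S : set nat) (d : R) : Prop :=
  (fun N : nat =>
     (\sum_(k < N) (if `[< S k.+1 >] then 1 else 0 : R)) / N%:R) @ \oo --> d.

Definition WM_set (R : realType) (S : set nat) : Prop :=
  exists mu : probability OmegaB R,
    invariant_prob_on (orbit_closure (indic S)) mu /\
    generic (orbit_closure (indic S)) mu (indic S) /\
    weakly_mixing (orbit_closure (indic S)) mu /\
    exists d : R, has_density S d /\ 0 < d.

Definition contains_IP_set (S : set nat) : Prop :=
  exists p : nat -> nat, (forall i, 0 < p i)%N /\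
    forall s : seq nat, s != [::] -> sorted ltn s -> S (\sum_(i <- s) p i)%N.

From Pilot Require Import Defs.
From HB Require Import structures.
From mathcomp Require Import all_boot all_order all_algebra.
From mathcomp Require Import all_classical all_reals all_analysis.
From mathcomp Require Import lra.
Set Implicit Arguments. Unset Strict Implicit. Unset Printing Implicit Defensive.
Import Order.TTheory GRing.Theory Num.Theory numFieldNormedType.Exports.
Local Open Scope classical_set_scope.
Local Open Scope ring_scope.

(* For a finite L, let A_L be the set of points of X = X_{1_S} whose
   coordinates in L are all 1.  If mu(A_L) > 0, genericity says that the
   times n with T^n 1_S in A_L have density mu(A_L) > 0, while weak mixing
   says that mu(A_L cap T^-(n+1) A_L) is close to mu(A_L)^2 outside a set of
   times of density zero; so some visit time n has mu(A_L cap T^-p A_L) > 0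
   with p = n + 1.  Then p + L lies in S and A_{L u (L+p)} has positive
   measure.  Starting from L = {0}, with mu(A_L) = d(S) > 0, and iterating
   produces p_1, p_2, ... all of whose finite sums lie in S. *)

Local Notation sh := Defs.shift.

Lemma sorted_ltn_rcons (t : seq nat) a :
  sorted ltn (rcons t a) = all (fun i => i < a)%N t && sorted ltn t.
Proof. by rewrite !(sorted_pairwise ltn_trans) pairwise_rcons. Qed.

Section IPBlocks.
Variable f : seq nat -> nat.

Fixpoint ip_blocks k : seq nat :=
  if k is k'.+1 then ip_blocks k' ++ [seq (j + f (ip_blocks k'))%N | j <- ip_blocks k']
  else [:: 0%N].

Lemma ip_blocks_sub k n : (k <= n)%N -> {subset ip_blocks k <= ip_blocks n}.
Proof.
move=> /subnK <-; elim: (n - k)%N => [//|m IH] j /IH.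
by rewrite addSn /= mem_cat => ->.
Qed.

Lemma sum_mem_ip_blocks (t : seq nat) k :
  sorted ltn t -> all (fun i => i < k)%N t ->
  (\sum_(i <- t) f (ip_blocks i))%N \in ip_blocks k.
Proof.
elim/last_ind: t k => [k _ _|t a IH k].
  by rewrite big_nil; apply: (@ip_blocks_sub 0); rewrite ?mem_head.
rewrite sorted_ltn_rcons all_rcons => /andP[t_lt_a t_sorted] /andP[a_lt_k _].
apply: (ip_blocks_sub a_lt_k).
rewrite -cats1 big_cat big_seq1 /= mem_cat; apply/orP; right.
by apply: map_f; apply: IH.
Qed.

End IPBlocks.

Lemma contains_IP_set_of_refinement (S : set nat) (good : seq nat -> Prop) :
  good [:: 0%N] ->
  (forall L, good L -> exists p, [/\ (0 < p)%N,
     forall j, j \in L -> S (p + j)%N & good (L ++ [seq (j + p)%N | j <- L])]) ->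
  contains_IP_set S.
Proof.
move=> good0 refine.
pose ok L p := [/\ (0 < p)%N,
  forall j, j \in L -> S (p + j)%N & good (L ++ [seq (j + p)%N | j <- L])].
have [f hf] : {f : seq nat -> nat & forall L, good L -> ok L (f L)}.
  apply: (@choice _ _ (fun L p => good L -> ok L p)) => L.
  have [/refine[p hp]|] := pselect (good L); first by exists p.
  by exists 0%N.
have good_blocks k : good (ip_blocks f k).
  by elim: k => [//|k IH]; case: (hf _ IH).
exists (fun k => f (ip_blocks f k)); split=> [i|s].
  by case: (hf _ (good_blocks i)).
case/lastP: s => [//|t a] _; rewrite sorted_ltn_rcons => /andP[t_lt_a t_sorted].
rewrite -cats1 big_cat big_seq1 /= addnC.
by case: (hf _ (good_blocks a)) => _ + _; apply; apply: sum_mem_ip_blocks.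
Qed.

Lemma iter_shiftE n (x : cantor_space) j : iter n sh x j = x (j + n)%N.
Proof. by elim: n x j => [|n IH] x j; rewrite ?addn0 //= /Defs.shift IH addnS. Qed.

Lemma shift_continuous : continuous (sh : cantor_space -> cantor_space).
Proof.
move=> x; apply/cvg_sup => i.
apply: (@continuous_comp_initial cantor_space cantor_space bool (fun f => f i)).
by move=> y; apply: (@proj_continuous nat (fun _ => bool) i.+1).
Qed.

Lemma iter_shift_continuous n : continuous (iter n sh : cantor_space -> cantor_space).
Proof.
elim: n => [|n IH] x /=; first exact: cvg_id.
change (continuous_at x (sh \o iter n sh)).
by apply: continuous_comp; [exact: IH | exact: shift_continuous].
Qed.

Definition cylinder (L : seq nat) : set cantor_space := [set x | forall j, j \in L -> x j].

Lemma near_cylinder L (x : cantor_space) :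
  \forall y \near x, (cylinder L y <-> cylinder L x).
Proof.
suff: \forall y \near x, forall j, j \in L -> y j = x j.
  by apply: filterS => y yx; split=> + j jL => /(_ j jL); rewrite yx.
elim: L => [|a L IH]; first exact: filterE.
have near_a : \forall y \near x, y a = x a.
  apply: (@proj_continuous nat (fun _ => bool) a x [set b | b = x a]).
  exact/principal_filterP.
apply: filterS (filterI near_a IH) => y [ya yL] j.
by rewrite in_cons => /orP[/eqP->|/yL].
Qed.

Lemma open_cylinder L : open (cylinder L).
Proof.
rewrite openE => x xL.
by apply: filterS (near_cylinder L x) => y [_]; apply.
Qed.

Lemma closed_cylinder L : closed (cylinder L).
Proof.
rewrite -openC openE => x xL.
by apply: filterS (near_cylinder L x) => y [yx _] /yx.
Qed.

Lemma continuous_indic_cylinder (R : realType) L :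
  continuous (\1_(cylinder L) : cantor_space -> R).
Proof.
move=> x; apply: cvg_near_cst; apply: filterS (near_cylinder L x) => y yx.
by rewrite /indic; congr (nat_of_bool _)%:R; apply/idP/idP => /set_mem/yx/mem_set.
Qed.

Lemma open_measurable_Omega (A : set cantor_space) :
  open A -> measurable (A : set OmegaB).
Proof. exact: sub_sigma_algebra. Qed.

Lemma closed_measurable_Omega (A : set cantor_space) :
  closed A -> measurable (A : set OmegaB).
Proof.
move=> cA; rewrite -(setCK A); apply: measurableC; apply: open_measurable_Omega.
by rewrite openC.
Qed.

Lemma probability_fineK (R : realType) (mu : probability OmegaB R) (A : set OmegaB) :
  measurable A -> (fine (mu A))%:E = mu A.
Proof.
move=> mA; rewrite fineK // ge0_fin_numE ?measure_ge0 //.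
by apply: le_lt_trans (probability_le1 _ mA) _; rewrite ltey.
Qed.

Lemma le_fine_probability (R : realType) (mu : probability OmegaB R) (A B : set OmegaB) :
  measurable A -> measurable B -> A `<=` B -> fine (mu A) <= fine (mu B).
Proof.
move=> mA mB AB; rewrite -lee_fin !probability_fineK //.
exact: le_measure (mem_set mA) (mem_set mB) AB.
Qed.

Lemma invr_le_twice_invS (R : realFieldType) (x : R) : 1 <= x -> x^-1 <= 2 / (x + 1).
Proof.
move=> x_ge1; have x_gt0 : 0 < x by apply: lt_le_trans x_ge1.
rewrite ler_pdivlMr ?ltr_wpDr // mulrDr mulVf ?gt_eqF // mulr1.
have : x^-1 <= 1 by rewrite invr_le1 // unitf_gt0.
lra.
Qed.

(* Otherwise t b_n <= e_(n+1) for all n, which forces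
   t c <= 2 lim (1/(N+1)) sum_(n<=N) e_n = 0. *)
Lemma cesaro_support_meets_small_shift (R : realType) (b e : nat -> R) (c t : R) :
  0 < c -> 0 < t -> (forall n, 0 <= b n <= 1) -> (forall n, 0 <= e n) ->
  (fun N : nat => (\sum_(n < N) b n) / N%:R) @ \oo --> c ->
  (fun N : nat => (\sum_(n < N) e n) / N%:R) @ \oo --> 0 ->
  exists n, b n != 0 /\ e n.+1 < t.
Proof.
move=> c_gt0 t_gt0 b01 e_ge0 cvg_b cvg_e; apply: contrapT => no_n.
have tb_le_e n : t * b n <= e n.+1.
  have [->|bn0] := eqVneq (b n) 0; first by rewrite mulr0 e_ge0.
  rewrite leNgt; apply/negP => en_lt; apply: no_n; exists n; split=> //.
  apply: lt_le_trans en_lt _.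
  by rewrite ler_piMr ?(ltW t_gt0) //; case/andP: (b01 n).
have cvg_tb : (fun N : nat => t * ((\sum_(n < N) b n) / N%:R)) @ \oo --> t * c.
  exact: cvgM (cvg_cst t) cvg_b.
have cvg_2e : (fun N : nat => 2 * ((\sum_(n < N.+1) e n) / N.+1%:R)) @ \oo --> (2 * 0 : R).
  apply: (cvgM (cvg_cst (2 : R))).
  by move: cvg_e; rewrite -(cvg_shiftS (fun N : nat => (\sum_(n < N) e n) / N%:R)).
suff : t * c <= 2 * 0 by rewrite mulr0 leNgt mulr_gt0.
apply: ler_cvg_to cvg_tb cvg_2e _; near=> N.
have N_ge1 : 1 <= N%:R :> R by rewrite ler1n; near: N; exists 1%N.
set E := \sum_(n < N.+1) e n.
have E_ge0 : 0 <= E by apply: sumr_ge0 => i _.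
have tsum_le : t * \sum_(n < N) b n <= E.
  rewrite /E big_ord_recl /= mulr_sumr ler_wpDl //.
  by apply: ler_sum => i _; apply: tb_le_e.
rewrite mulrA; apply: (@le_trans _ _ (E / N%:R)).
  by apply: ler_wpM2r => //; rewrite invr_ge0 (le_trans _ N_ge1).
by rewrite mulrA [2 * E]mulrC -mulrA ler_wpM2l // -[N.+1%:R]natr1 invr_le_twice_invS.
Unshelve. all: by end_near.
Qed.

Lemma closed_orbit_closure (x : cantor_space) : closed (orbit_closure x).
Proof. exact: closed_closure. Qed.

Section WeakMixingReturns.
Variables (R : realType) (S : set nat) (mu : probability OmegaB R).
Local Notation xi := (Defs.indic S).
Local Notation X := (orbit_closure xi).
Hypothesis xi_generic : generic X mu xi.
Hypothesis mu_weakly_mixing : weakly_mixing X mu.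

Lemma measurable_cylinderI L : measurable (cylinder L `&` X : set OmegaB).
Proof.
apply: measurableI; first by apply: open_measurable_Omega; apply: open_cylinder.
by apply: closed_measurable_Omega; apply: closed_orbit_closure.
Qed.

Lemma cvg_cesaro_visits L :
  (fun N : nat => (\sum_(n < N) (\1_(cylinder L) (iter n sh xi) : R)) / N%:R)
    @ \oo --> fine (mu (cylinder L `&` X)).
Proof.
have cont : {within X, continuous (\1_(cylinder L) : cantor_space -> R)}.
  by apply: continuous_subspaceT; apply: continuous_indic_cylinder.
move: (xi_generic cont); rewrite integral_indic; last 2 first.
- by apply: closed_measurable_Omega; apply: closed_orbit_closure.
- by apply: open_measurable_Omega; apply: open_cylinder.
move=> cvg_visits; apply: (@fine_cvg _ _ _ _ (fun N : nat =>
  ((\sum_(n < N) (\1_(cylinder L) (iter n sh xi) : R)) / N%:R)%:E)).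
by rewrite probability_fineK //; apply: measurable_cylinderI.
Qed.

Lemma exists_return L : 0 < fine (mu (cylinder L `&` X)) ->
  exists m, cylinder L (iter m sh xi) /\
    0 < fine (mu ((cylinder L `&` X) `&` (X `&` iter m.+1 sh @^-1` (cylinder L `&` X)))).
Proof.
set A := cylinder L `&` X; set c := fine (mu A) => c_gt0.
have mA : measurable (A : set OmegaB) by exact: measurable_cylinderI.
have b01 n : 0 <= (\1_(cylinder L) (iter n sh xi) : R) <= 1.
  by rewrite /indic; case: (_ \in _); rewrite /= ?lexx ?ler01.
pose e n := `| fine (mu (A `&` (X `&` iter n sh @^-1` A))) - c * c |.
have [m [visit close]] := cesaro_support_meets_small_shift c_gt0 (mulr_gt0 c_gt0 c_gt0)
  b01 (fun n => normr_ge0 _ : 0 <= e n) (@cvg_cesaro_visits L)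
  (mu_weakly_mixing mA mA (@subIsetr _ _ _) (@subIsetr _ _ _)).
exists m; split.
  by apply/set_mem; apply: contraNT visit => /negbTE; rewrite /indic => ->.
by move: close; rewrite ltr_norml => /andP[+ _]; lra.
Qed.

Lemma refine_cylinder L : 0 < fine (mu (cylinder L `&` X)) ->
  exists p, [/\ (0 < p)%N, forall j, j \in L -> S (p + j)%N &
    0 < fine (mu (cylinder (L ++ [seq (j + p)%N | j <- L]) `&` X))].
Proof.
move=> /exists_return[m [visit return_pos]]; exists m.+1; split=> //.
  move=> j /visit; rewrite iter_shiftE /Defs.indic => /asboolP.
  by rewrite addSn addnC.
apply: lt_le_trans return_pos (le_fine_probability _ _ _ _) => //.
- apply: closed_measurable_Omega; apply: closedI.
    by apply: closedI; [exact: closed_cylinder | exact: closed_orbit_closure].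
  apply: closedI; first exact: closed_orbit_closure.
  apply: (continuous_closedP _).1; first exact: iter_shift_continuous.
  by apply: closedI; [exact: closed_cylinder | exact: closed_orbit_closure].
- exact: measurable_cylinderI.
move=> x [[xL xX] [_ [shiftxL _]]]; split=> // j; rewrite mem_cat => /orP[/xL //|].
by case/mapP => k kL ->; move: (shiftxL k kL); rewrite iter_shiftE.
Qed.

Lemma indic_cylinder0_orbit n :
  \1_(cylinder [:: 0%N]) (iter n sh xi) = (if `[< S n.+1 >] then 1 else 0 : R).
Proof.
rewrite /indic; have -> : (iter n sh xi \in cylinder [:: 0%N]) = `[< S n.+1 >].
  apply/idP/idP => [/set_mem/(_ 0%N (mem_head _ _))|Sn]; first by rewrite iter_shiftE.
  by apply/mem_set => j; rewrite inE => /eqP ->; rewrite iter_shiftE.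
by case: asboolP.
Qed.

Lemma density_cylinder0 (d : R) : has_density S d ->
  fine (mu (cylinder [:: 0%N] `&` X)) = d.
Proof.
move=> dS; apply: (cvg_unique _ (@cvg_cesaro_visits [:: 0%N])) => //=.
by under eq_fun => N do under eq_bigr => n _ do rewrite indic_cylinder0_orbit.
Qed.

End WeakMixingReturns.

Theorem mainTheorem7 (R : realType) (S : set nat) :
  S `<=` [set n | (0 < n)%N] -> WM_set R S -> contains_IP_set S.
Proof.
move=> _ [mu [_ [generic_xi [wm [d [dS d_gt0]]]]]].
apply: (@contains_IP_set_of_refinement S
  (fun L => 0 < fine (mu (cylinder L `&` orbit_closure (Defs.indic S))))).
  by rewrite (density_cylinder0 generic_xi dS).
by move=> L; apply: refine_cylinder.
Qed.
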